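(* Let $G$ be a finitely generated group with finite generating set $S_G$ and let $H\ne\{1\}$ be a finite group. Equip $H\wr G$ with the word metric with respect to $(H\setminus\{1\})\cup S_G$ and let $K$ be the kernel of the projection $H\wr G\to G$ with the induced metric. If $\gamma$ is the growth function of $G$, then $D_K^0(r):=(2r+1)\gamma(r)$ is a $0$-dimensional control function of $K$.
   Context: Wreath product: $H\wr G$ is the set of pairs $(f,g)$, $f:G\to H$ finitely supported, with $(f_1,g_1)(f_2,g_2)=(f_1\cdot(g_1f_2),g_1g_2)$ where $(gf)(\gamma)=f(g^{-1}\gamma)$; $g\in G$ is identified with $(1,g)$ and $a\in H$ with $(f_a,1)$, $f_a(1)=a$, $f_a(\gamma)=1$ otherwise; the projection is $(f,g)\mapsto g$. Growth function: $\gamma(r)=\#\{g\in G:|g|_{S_G}<r\}$. For a metric space $X$, $r>0$: $r$-components of $Y\subseteq X$ are classes of points joined by sequences in $Y$ with consecutive distances $<r$. An $m$-dimensional control function of $X$ is $D:\mathbb{R}_+\to\mathbb{R}_+\cup\{\infty\}$ such that for each $r>0$ there is a cover $\{X_0,\dots,X_m\}$ of $X$ such that every open ball $B(x,r)$ lies in some $X_i$ and every $r$-component of each $X_i$ has diameter at most $D(r)$. *)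

From HB Require Import structures.
From mathcomp Require Import all_boot all_order all_algebra all_fingroup.
From mathcomp Require Import finmap.
From mathcomp Require Import boolp classical_sets cardinality reals.
From mathcomp Require Import constructive_ereal ereal.

Set Implicit Arguments.
Unset Strict Implicit.
Unset Printing Implicit Defensive.

Import Order.TTheory GRing.Theory Num.Theory.
Local Open Scope classical_set_scope.

Definition word_dist (R : realType) (X : eqType) (mul : X -> X -> X)
  (A : set X) (x y : X) : \bar R :=
  ereal_inf [set ((size w)%:R)%:E |
             w in [set w : seq X | (forall a, a \in w -> A a) /\ foldl mul x w = y]].

Section GroupWordMetric.
Local Open Scope fset_scope.
Local Open Scope group_scope.
Variables (R : realType) (G : groupType) (S : seq G).

Definition sym_gens : set G := [set s | s \in S \/ s^-1 \in S].

Definition generates : Prop :=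
  forall g : G, exists w : seq G,
    (forall a, a \in w -> sym_gens a) /\ foldl mul 1 w = g.

Definition word_length (g : G) : \bar R := word_dist R mul sym_gens 1 g.

Definition growth (r : R) : nat :=
  #|` fset_set [set g : G | (word_length g < r%:E)%E] |.

End GroupWordMetric.

Section Wreath.
Local Open Scope fset_scope.
Local Open Scope group_scope.
Variables (H : finGroupType) (G : groupType).

Definition lamps := {fsfun G -> H with 1}.

Definition lamps_mul (f1 f2 : lamps) : lamps :=
  [fsfun x in finsupp f1 `|` finsupp f2 => f1 x * f2 x | 1].

Definition lamps_shift (g : G) (f : lamps) : lamps :=
  [fsfun x in [fset g * y | y in finsupp f] => f (g^-1 * x) | 1].

Definition lamps_one : lamps := [fsfun x in fset0 => 1 | 1].

Definition lamps_delta (a : H) : lamps := [fsfun x in [fset 1] => a | 1].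

Definition wreath := (lamps * G)%type.

Definition wreath_mul (x y : wreath) : wreath :=
  (lamps_mul x.1 (lamps_shift x.2 y.1), x.2 * y.2).

Definition wreath_of_G (g : G) : wreath := (lamps_one, g).

Definition wreath_of_H (a : H) : wreath := (lamps_delta a, 1).

(* symmetric version of the generating set (H \ {1}) u S_G, i.e. the set
   (H \ {1}) u S_G u S_G^-1 ((H \ {1}) is already closed under inverses and
   the inverse of (1, s) is (1, s^-1)) *)
Definition wreath_gens (S : seq G) : set wreath :=
  [set x | (exists a : H, a != 1 /\ x = wreath_of_H a) \/
           (exists s : G, s \in S /\ (x = wreath_of_G s \/ x = wreath_of_G s^-1))].

Definition wreath_dist (R : realType) (S : seq G) (x y : wreath) : \bar R :=
  word_dist R wreath_mul (wreath_gens S) x y.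

Definition kernel_dist (R : realType) (S : seq G) (f1 f2 : lamps) : \bar R :=
  wreath_dist R S (f1, 1) (f2, 1).

End Wreath.

Section Control.
Local Open Scope ereal_scope.
Variables (R : realType) (X : Type) (d : X -> X -> \bar R).

Definition r_connected (Y : set X) (r : R) (x y : X) : Prop :=
  exists (n : nat) (z : nat -> X),
    [/\ z 0%N = x, z n = y, (forall i, (i <= n)%N -> Y (z i)) &
        (forall i, (i < n)%N -> d (z i) (z i.+1) < r%:E)].

Definition open_ball (x : X) (r : R) : set X := [set y | d x y < r%:E].

Definition control_function (m : nat) (D : R -> \bar R) : Prop :=
  forall r : R, (0 < r)%R ->
    exists U : 'I_m.+1 -> set X,
      [/\ (forall x, exists i, U i x),
          (forall x, exists i, open_ball x r `<=` U i) &
          (forall i x y, r_connected (U i) r x y -> d x y <= D r)].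

End Control.

From HB Require Import structures.
From mathcomp Require Import all_boot all_order all_algebra all_fingroup.
From mathcomp Require Import finmap.
From mathcomp Require Import boolp classical_sets cardinality reals.
From mathcomp Require Import constructive_ereal ereal.

(* One piece, K itself, suffices.  Reading a word in the generators from (f, 1)
   moves the cursor by letters of S only, so a word of length < r changes lamps
   only inside the ball of radius r of G.  Hence the two ends of an r-chain in K
   differ at no more than gamma(r) positions, and each of these lamps can be
   reset by walking to its position g, switching it and walking back, with
   2|g| + 1 <= 2r + 1 letters. *)

Set Implicit Arguments.
Unset Strict Implicit.
Unset Printing Implicit Defensive.
Import Order.TTheory GRing.Theory Num.Theory.

Section WordDist.
Variables (R : realType) (X : eqType) (mul : X -> X -> X) (A : set X).

Lemma word_dist_le_size (w : seq X) x y :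
  {in w, forall a, A a} -> foldl mul x w = y ->
  (word_dist R mul A x y <= (size w)%:R%:E)%E.
Proof. by move=> wA wxy; apply: ge_ereal_inf; exists (size w)%:R%:E => //; exists w. Qed.

Lemma word_dist_lt_word x y (r : R) :
  (word_dist R mul A x y < r%:E)%E ->
  exists w : seq X, [/\ {in w, forall a, A a}, foldl mul x w = y & ((size w)%:R < r)%R].
Proof. by move=> /ereal_inf_lt[_ [w [wA wxy] <-]]; rewrite lte_fin; exists w. Qed.

End WordDist.

Section Words.
Variable T : eqType.

Fixpoint words (L : seq T) (n : nat) : seq (seq T) :=
  if n is n'.+1 then [::] :: [seq a :: w | a <- L, w <- words L n'] else [:: [::]].

Lemma mem_words (L : seq T) n (w : seq T) :
  size w <= n -> all (mem L) w -> w \in words L n.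
Proof.
elim: n w => [|n IHn] [|a w] //=; try by rewrite mem_head.
move=> sw /andP[aL wL]; rewrite inE; apply/orP; right.
by apply: allpairs_f => //; apply: IHn.
Qed.

End Words.

Section GroupWords.
Local Open Scope group_scope.
Variables (G : groupType) (S : seq G).

Lemma foldl_mul1 (v : seq G) h : foldl mul h v = h * foldl mul 1 v.
Proof.
elim: v h => [|a v IHv] h /=; first by rewrite mulg1.
by rewrite IHv [in RHS]IHv mul1g mulgA.
Qed.

Lemma foldl_mul_rev_inv (u : seq G) :
  foldl mul 1 (rev [seq b^-1 | b <- u]) = (foldl mul 1 u)^-1.
Proof.
elim: u => [|a u IHu] /=; first by rewrite invg1.
by rewrite rev_cons foldl_rcons IHu [in RHS]foldl_mul1 mul1g invMg.
Qed.

Lemma sym_gensV b : sym_gens S b -> sym_gens S b^-1.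
Proof. by rewrite /sym_gens /= invgK => -[]; [right|left]. Qed.

Lemma finite_word_length_lt (R : realType) (r : R) :
  finite_set [set g : G | (word_length R S g < r%:E)%E].
Proof.
pose L := S ++ [seq s^-1 | s <- S].
apply: (sub_finite_set _ (finite_seq (map (foldl mul 1) (words L (Num.truncn r))))).
move=> g /word_dist_lt_word[w [wS <- lt_w_r]]; apply/map_f/mem_words.
  by rewrite -ltnS -(ltr_nat R); exact: lt_trans lt_w_r (truncnS_gt r).
apply/allP => b /wS bS; rewrite inE mem_cat.
by case: bS => [->//|bS]; rewrite -[b]invgK map_f ?orbT.
Qed.

End GroupWords.

Section Wreath.
Local Open Scope group_scope.
Variables (H : finGroupType) (G : groupType) (S : seq G).
Implicit Types (f : lamps H G) (g x : G).

Lemma lamps_mulE f1 f2 x : lamps_mul f1 f2 x = f1 x * f2 x.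
Proof.
rewrite /lamps_mul fsfunE; case: ifP => // /negbT.
by rewrite inE negb_or !memNfinsupp => /andP[/eqP -> /eqP ->]; rewrite mulg1.
Qed.

Lemma lamps_shiftE g f x : lamps_shift g f x = f (g^-1 * x).
Proof.
rewrite /lamps_shift fsfunE; case: ifP => // /negbT x_out.
apply/esym/eqP; rewrite -memNfinsupp; apply: contra x_out => x_in.
by apply/imfsetP; exists (g^-1 * x); rewrite ?mulKVg.
Qed.

Lemma lamps_oneE x : lamps_one H G x = 1.
Proof. by rewrite /lamps_one fsfunE inE. Qed.

Lemma lamps_shift_deltaE g (a : H) x :
  lamps_shift g (lamps_delta G a) x = if x == g then a else 1.
Proof.
rewrite lamps_shiftE /lamps_delta fsfunE inE.
congr (if _ then _ else _).
by apply/eqP/eqP => [/(canRL (mulKVg g))|->]; rewrite ?mulg1 ?mulVg.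
Qed.

Lemma wreath_mul_of_G f g s : wreath_mul (f, g) (wreath_of_G H s) = (f, g * s).
Proof.
congr pair; apply/fsfunP => x.
by rewrite lamps_mulE lamps_shiftE lamps_oneE mulg1.
Qed.

Lemma wreath_mul_of_H f g a :
  wreath_mul (f, g) (wreath_of_H G a) =
  (lamps_mul f (lamps_shift g (lamps_delta G a)), g).
Proof. by rewrite /wreath_mul /= mulg1. Qed.

Lemma foldl_wreath_of_G f g (v : seq G) :
  foldl (@wreath_mul H G) (f, g) (map (@wreath_of_G H G) v) = (f, foldl mul g v).
Proof. by elim: v g => //= s v IHv g; rewrite wreath_mul_of_G IHv. Qed.

Lemma wreath_gens_of_G s : sym_gens S s -> wreath_gens S (wreath_of_G H s).
Proof.
case=> sS; right; first by exists s; split; last left.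
by exists s^-1; rewrite invgK; split; last right.
Qed.

Lemma foldl_wreath_lamp_neq (w : seq (wreath H G)) f g x :
  {in w, forall a, wreath_gens S a} ->
  (foldl (@wreath_mul H G) (f, g) w).1 x != f x ->
  exists u : seq G,
    [/\ {in u, forall b, sym_gens S b}, size u <= size w & foldl mul g u = x].
Proof.
elim: w f g => [|a w IHw] f g /=; first by rewrite eqxx.
move=> aw_gens; have w_gens : {in w, forall b, wreath_gens S b}.
  by move=> b bw; apply: aw_gens; rewrite inE bw orbT.
case: (aw_gens a (mem_head _ _)) => [[c [_ ->]] | [s [sS a_s]]].
  rewrite wreath_mul_of_H; set f' := lamps_mul _ _ => lamp_neq.
  have [lamp_eq|/(IHw _ _ w_gens)[u [uS size_u <-]]] :=
    eqVneq ((foldl (@wreath_mul H G) (f', g) w).1 x) (f' x).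
    have [->|xg] := eqVneq x g; first by exists [::].
    by rewrite lamp_eq lamps_mulE lamps_shift_deltaE (negbTE xg) mulg1 eqxx in lamp_neq.
  by exists u; split=> //; apply: leqW.
have [s' [s'S ->]] : exists s', sym_gens S s' /\ a = wreath_of_G H s'.
  case: a_s => ->; first by exists s; split; first left.
  by exists s^-1; split; first by right; rewrite invgK.
rewrite wreath_mul_of_G => /(IHw _ _ w_gens)[u [uS size_u <-]].
exists (s' :: u); split=> // b; rewrite inE => /predU1P[->|/uS] //.
Qed.

Lemma wreath_walk_set_lamp f (u : seq G) (c : H) :
  {in u, forall b, sym_gens S b} ->
  exists (f' : lamps H G) (W : seq (wreath H G)),
    [/\ {in W, forall a, wreath_gens S a}, size W <= (size u).*2.+1,
        foldl (@wreath_mul H G) (f, 1) W = (f', 1) &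
        forall x, f' x = if x == foldl mul 1 u then c else f x].
Proof.
move=> uS; set g := foldl mul 1 u.
have [switch_id|switch_neq1] := eqVneq ((f g)^-1 * c) 1.
  exists f, [::]; split=> // x; have [->|//] := eqVneq x g.
  by rewrite -(mulKVg (f g) c) switch_id mulg1.
exists (lamps_mul f (lamps_shift g (lamps_delta G ((f g)^-1 * c)))).
exists (map (@wreath_of_G H G) u ++
        wreath_of_H G ((f g)^-1 * c) :: map (@wreath_of_G H G) (rev [seq b^-1 | b <- u])).
split.
- move=> a; rewrite mem_cat inE => /or3P[/mapP[b /uS bS ->]| /eqP ->|].
  + exact: wreath_gens_of_G.
  + by left; exists ((f g)^-1 * c).
  + move=> /mapP[_ /[!mem_rev] /mapP[b /uS bS ->] ->].
    exact/wreath_gens_of_G/sym_gensV.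
- by rewrite size_cat /= !size_map size_rev size_map -addnn addnS.
- rewrite foldl_cat foldl_wreath_of_G /= wreath_mul_of_H foldl_wreath_of_G.
  by rewrite foldl_mul1 foldl_mul_rev_inv mulgV.
- move=> x; rewrite lamps_mulE lamps_shift_deltaE.
  by have [->|_] := eqVneq x g; rewrite ?mulKVg ?mulg1.
Qed.

Lemma wreath_walk_to_lamps (R : realType) (r : R) (l : seq G) f f' :
  (forall x, f x != f' x -> x \in l) ->
  {in l, forall x, (word_length R S x < r%:E)%E} ->
  exists W : seq (wreath H G),
    [/\ {in W, forall a, wreath_gens S a},
        foldl (@wreath_mul H G) (f, 1) W = (f', 1) &
        ((size W)%:R <= (2 * r + 1) * (size l)%:R)%R].
Proof.
elim: l f => [|g l IHl] f lamp_neq l_ball.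
  exists [::]; split=> //=; last by rewrite mulr0.
  by congr pair; apply/fsfunP => x; apply/eqP/negP => /negP/lamp_neq.
have [u [uS ug size_u]] := word_dist_lt_word (l_ball g (mem_head _ _)).
have [f1 [W1 [W1_gens size_W1 W1_f1]]] := wreath_walk_set_lamp f (f' g) uS.
rewrite ug => f1E.
have [|x xl|W2 [W2_gens W2_f' size_W2]] := IHl f1.
- move=> x; rewrite f1E; have [->|xg] := eqVneq x g; first by rewrite eqxx.
  by move/lamp_neq; rewrite inE (negbTE xg).
- by apply: l_ball; rewrite inE xl orbT.
exists (W1 ++ W2); split.
- by move=> a; rewrite mem_cat => /orP[/W1_gens|/W2_gens].
- by rewrite foldl_cat W1_f1.
rewrite size_cat natrD /= -[(size l).+1]addn1 natrD mulrDr mulr1 addrC lerD //.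
apply: le_trans (_ : ((size u).*2.+1)%:R <= _)%R; first by rewrite ler_nat.
by rewrite -addn1 -muln2 natrD natrM mulrC lerD // ler_wpM2l // ltW.
Qed.

End Wreath.

Section KernelMetric.
Local Open Scope ereal_scope.
Variables (R : realType) (H : finGroupType) (G : groupType) (S : seq G).
Implicit Types (f : lamps H G) (r : R).

Lemma kernel_dist_lt_lamp_neq r f1 f2 x :
  kernel_dist R S f1 f2 < r%:E -> f1 x != f2 x -> word_length R S x < r%:E.
Proof.
move=> /word_dist_lt_word[w [w_gens w_f2 size_w]] lamp_neq.
have [|u [uS size_u <-]] := foldl_wreath_lamp_neq w_gens (f := f1) (g := 1%g) (x := x).
  by rewrite w_f2 eq_sym.
apply: le_lt_trans (word_dist_le_size R uS erefl) _.
by rewrite lte_fin (le_lt_trans _ size_w) ?ler_nat.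
Qed.

Lemma r_connected_lamp_neq (Y : set (lamps H G)) r f1 f2 x :
  r_connected (kernel_dist R S) Y r f1 f2 -> f1 x != f2 x ->
  word_length R S x < r%:E.
Proof.
move=> [n [z [<- <- _ steps]]].
elim: n steps => [|n IHn] steps; first by rewrite eqxx.
have [lamp_eq|lamp_neq _] := eqVneq (z 0%N x) (z n x).
  by rewrite lamp_eq; apply: kernel_dist_lt_lamp_neq (steps n (ltnSn n)).
by apply: IHn lamp_neq => i /ltnW; apply: steps.
Qed.

Lemma kernel_dist_le_growth r f1 f2 : (0 <= r)%R ->
  (forall x, f1 x != f2 x -> word_length R S x < r%:E) ->
  kernel_dist R S f1 f2 <= ((2 * r + 1) * (growth S r)%:R)%:E.
Proof.
move=> r_ge0 lamp_neq_ball.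
pose l := [seq x <- enum_fset (finsupp f1 `|` finsupp f2)%fset | f1 x != f2 x].
have l_lamp_neq x : f1 x != f2 x -> x \in l.
  move=> lamp_neq; rewrite mem_filter lamp_neq /= inE !mem_finsupp.
  by apply: contraR lamp_neq; rewrite negb_or !negbK => /andP[/eqP -> /eqP ->].
have l_ball : {in l, forall x, word_length R S x < r%:E}.
  by move=> x; rewrite mem_filter => /andP[/lamp_neq_ball].
have [W [W_gens W_f2 size_W]] := wreath_walk_to_lamps l_lamp_neq l_ball.
apply: le_trans (word_dist_le_size R W_gens W_f2) _.
rewrite lee_fin (le_trans size_W) // ler_wpM2l ?addr_ge0 ?mulr_ge0 // ler_nat.
have uniq_l : uniq l by rewrite filter_uniq // fset_uniq.
rewrite /growth -(undup_id uniq_l) -card_fseq; apply/fsubset_leq_card/fsubsetP.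
move=> x; rewrite inE => /l_ball x_ball.
by rewrite in_fset_set ?inE //; apply: finite_word_length_lt.
Qed.

End KernelMetric.

Theorem theorem4p2 (R : realType) (G : groupType) (S : seq G) (H : finGroupType) :
  generates S ->
  (exists a : H, a != 1%g) ->
  control_function (kernel_dist (H := H) R S) 0
    (fun r : R => (((2 * r + 1) * (growth S r)%:R)%R)%:E).
Proof.
move=> _ _ r r_gt0; exists (fun _ => setT); split; try by exists ord0.
move=> _ f1 f2 chain; apply: kernel_dist_le_growth; first exact: ltW.
by move=> x; apply: r_connected_lamp_neq chain.
Qed.
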